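(* Let $p\in\mathbb N$ with $p\ge 6$, and write $p=5k+r$ with $k\in\mathbb N$ and $0\le r\le 4$. If $G$ is a graph on $p$ vertices containing no copy of $T_6^2$, then $e(G)\le 2p-\frac{r(5-r)}{2}$.
   Context: All graphs are finite and simple; a graph ''contains'' $H$ if it has a subgraph isomorphic to $H$; $e(G)$ is the number of edges of $G$. $T_6^2$ is the tree on vertex set $\{v_0,\ldots,v_5\}$ with edges $v_0v_1,v_0v_2,v_0v_3,v_3v_4,v_3v_5$. *)

From mathcomp Require Import all_boot.
Set Implicit Arguments. Unset Strict Implicit. Unset Printing Implicit Defensive.

Definition simple_graph (T : finType) (e : rel T) : Prop :=
  symmetric e /\ irreflexive e.

Definition edge_set (T : finType) (e : rel T) : {set {set T}} :=
  [set E : {set T} | [exists x, exists y, e x y && (E == [set x; y])]].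

Definition num_edges (T : finType) (e : rel T) : nat := #|edge_set e|.

Definition T62_edges : seq ('I_6 * 'I_6) :=
  [:: (inord 0, inord 1); (inord 0, inord 2); (inord 0, inord 3);
      (inord 3, inord 4); (inord 3, inord 5)].

Definition contains_T62 (T : finType) (e : rel T) : Prop :=
  exists f : 'I_6 -> T, injective f /\
    forall uv, uv \in T62_edges -> e (f uv.1) (f uv.2).

From mathcomp Require Import all_boot zify.
Set Implicit Arguments. Unset Strict Implicit. Unset Printing Implicit Defensive.

(* For a vertex set S write deg_S v for the number of neighbours of v in S,
   D(S) for the degree sum over S (twice the number of edges of G[S]) and
   h(n) = r(5 - r) with r = n mod 5.  By the handshake identity the theorem is
   the case S = V of the bound  D(S) + h(|S|) <= 4|S|,  valid for every vertex
   set S of a T_6^2-free graph; it is proved by strong induction on |S|.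
   - The only structural input: an edge uv with two further neighbours at u
     and two at v, all distinct, spans a copy of T_6^2.  Hence a vertex of
     degree >= 5 has only neighbours of degree <= 2, and around a vertex of
     degree >= 4 every neighbour of degree >= 3 keeps its neighbourhood in N[u].
   - |S| <= 5: D(S) <= |S|(|S|-1), and the bound is checked directly.
   - Some u of degree 4 has a "sealed" closed neighbourhood (no edge leaves
     it): split S into N[u] and the rest, using that h is subadditive.
   - Otherwise D(S) + 6 <= 4|S|, which suffices as h <= 6: with two vertices
     of degree >= 5, or exactly one, a discharging argument (the light end of
     an edge to a heavy vertex takes the whole charge of the edge) gives it;
     with maximum degree 4 a local count around an unsealed degree-4 vertex,
     or the trivial bound D(S) <= 3|S| if there is none, gives it. *)

Definition defect (n : nat) : nat := (n %% 5) * (5 - n %% 5).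

Lemma defect_le6 n : defect n <= 6.
Proof.
rewrite /defect; have : n %% 5 < 5 by rewrite ltn_pmod.
by case: (n %% 5) => [|[|[|[|[|r]]]]].
Qed.

Lemma defect_subadd m n : defect (m + n) <= defect m + defect n.
Proof.
rewrite /defect -modnDm.
have : m %% 5 < 5 by rewrite ltn_pmod.
have : n %% 5 < 5 by rewrite ltn_pmod.
by case: (n %% 5) => [|[|[|[|[|y]]]]] // _; case: (m %% 5) => [|[|[|[|[|x]]]]].
Qed.

Lemma defect_small n : n <= 5 -> n.-1 * n + defect n <= 4 * n.
Proof. by case: n => [|[|[|[|[|[|n]]]]]]. Qed.

Section FiniteSets.
Variable T : finType.
Implicit Types (A B S Q : {set T}) (F : T -> nat).

Lemma sum_le_card A F c : (forall v, v \in A -> F v <= c) -> \sum_(v in A) F v <= c * #|A|.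
Proof. by move=> H; rewrite mulnC -sum_nat_const; apply: leq_sum. Qed.

Lemma extend_bound S Q F c k : Q \subset S -> (forall v, v \in S -> F v <= c) ->
  \sum_(v in Q) F v + k <= c * #|Q| -> \sum_(v in S) F v + k <= c * #|S|.
Proof.
move=> QS H HQ; rewrite (big_setID Q) /= (setIidPr QS) -(cardsID Q S) (setIidPr QS).
have : \sum_(v in S :\: Q) F v <= c * #|S :\: Q|.
  by apply: sum_le_card => v /setDP[vS _]; apply: H.
lia.
Qed.

Lemma two_plus_two A B : 1 < #|A| -> 1 < #|B| -> 3 < #|A :|: B| ->
  exists a1 a2 b1 b2,
    [/\ a1 \in A, a2 \in A, b1 \in B, b2 \in B & uniq [:: a1; a2; b1; b2]].
Proof.
move=> hA hB hAB.
have cAB : #|A :|: B| = #|A| + #|B :\: A|.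
  by rewrite cardsU cardsD setIC; have := subset_leq_card (subsetIl B A); lia.
(* Take b1, b2 from B \ A if possible; if B is inside A, take a1, a2 in A
   away from them; if B \ A = {b1}, then |A| >= 3 leaves room around b2. *)
case: (ltnP 1 #|B :\: A|) => [|hBA].
  case/card_gt1P => b1 [b2 [/setDP[b1B b1A] /setDP[b2B b2A] b12]].
  case/card_gt1P: hA => a1 [a2 [a1A a2A a12]].
  exists a1, a2, b1, b2; split=> //=; rewrite !inE !negb_or a12 b12.
  by rewrite !(memPn b1A) ?(memPn b2A).
case: (posnP #|B :\: A|) => [hBA0|hBA1].
  have /subsetP sBA : B \subset A by rewrite -setD_eq0 -cards_eq0 hBA0.
  case/card_gt1P: hB => b1 [b2 [b1B b2B b12]].
  have : 1 < #|A :\ b1 :\ b2|.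
    have b2A' : b2 \in A :\ b1 by rewrite in_setD1 eq_sym b12 sBA.
    by move: (cardsD1 b1 A) (cardsD1 b2 (A :\ b1)); rewrite (sBA _ b1B) b2A' /=; lia.
  case/card_gt1P => a1 [a2 [/setD1P[a1b2 /setD1P[a1b1 a1A]] /setD1P[a2b2 /setD1P[a2b1 a2A]] a12]].
  by exists a1, a2, b1, b2; split=> //=; rewrite !inE !negb_or a12 a1b1 a1b2 a2b1 a2b2 b12.
have /card_gt0P [b1 /setDP[b1B b1A]] : 0 < #|B :\: A| by [].
have /card_gt0P [b2 /setD1P[b21 b2B]] : 0 < #|B :\ b1|.
  by move: (cardsD1 b1 B); rewrite b1B /=; lia.
have : 1 < #|A :\ b2| by move: (cardsD1 b2 A); case: (b2 \in A) => /=; lia.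
case/card_gt1P => a1 [a2 [/setD1P[a1b2 a1A] /setD1P[a2b2 a2A] a12]].
exists a1, a2, b1, b2; split=> //=; rewrite !inE !negb_or a12 a1b2 a2b2 (eq_sym b1) b21.
by rewrite !(memPn b1A).
Qed.

Lemma reweight_sym S (f c : T -> T -> nat) :
  (forall v w, f v w = f w v) -> (forall v w, c v w + c w v = 2) ->
  \sum_(v in S) \sum_(w in S) f v w * c v w = \sum_(v in S) \sum_(w in S) f v w.
Proof.
move=> fsym csum; apply/eqP; rewrite -(eqn_pmul2l (isT : 0 < 2)); apply/eqP.
have swap : \sum_(v in S) \sum_(w in S) f v w * c v w =
            \sum_(v in S) \sum_(w in S) f v w * c w v.
  by rewrite exchange_big; apply: eq_bigr => v _; apply: eq_bigr => w _; rewrite fsym.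
rewrite mul2n -addnn {2}swap -big_split big_distrr /=.
apply: eq_bigr => v _; rewrite -big_split big_distrr /=; apply: eq_bigr => w _.
by rewrite -mulnDr csum mulnC.
Qed.

End FiniteSets.

Section Graph.
Variables (T : finType) (e : rel T).
Hypotheses (esym : symmetric e) (eirr : irreflexive e).
Implicit Types (S A : {set T}) (u v w x y z : T).

Definition nbhd S v : {set T} := [set w in S | e v w].
Definition deg S v : nat := #|nbhd S v|.
Definition degsum S : nat := \sum_(v in S) deg S v.

Lemma in_nbhd S v w : (w \in nbhd S v) = (w \in S) && e v w.
Proof. by rewrite inE. Qed.

Lemma adj_neq x y : e x y -> x != y.
Proof. by apply: contraTneq => ->; rewrite eirr. Qed.

Lemma nbhd_sub S v : nbhd S v \subset S.
Proof. by apply/subsetP => w; rewrite in_nbhd => /andP[]. Qed.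

Lemma nbhd_irr S v : v \notin nbhd S v.
Proof. by rewrite in_nbhd eirr andbF. Qed.

Lemma closed_nbhd_sub S v : v \in S -> v |: nbhd S v \subset S.
Proof. by move=> vS; rewrite subUset sub1set vS nbhd_sub. Qed.

Lemma card_closed_nbhd S v : #|v |: nbhd S v| = (deg S v).+1.
Proof. by rewrite cardsU1 nbhd_irr. Qed.

Lemma deg_sum S v : deg S v = \sum_(w in S) e v w.
Proof.
rewrite /deg -sum1_card [LHS]big_mkcond [RHS]big_mkcond /=.
by apply: eq_bigr => w _; rewrite in_nbhd; case: (w \in S); case: (e v w).
Qed.

Lemma deg_le_pred S v : v \in S -> deg S v <= #|S|.-1.
Proof.
move=> vS; rewrite (cardsD1 v S) vS /deg; apply: subset_leq_card.
by apply/subsetP => w; rewrite in_nbhd in_setD1 => /andP[-> /adj_neq]; rewrite eq_sym => ->.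
Qed.

Lemma degsum_small S : #|S| <= 5 -> degsum S + defect #|S| <= 4 * #|S|.
Proof.
move=> small; apply: leq_trans (defect_small small); rewrite leq_add2r.
by apply: sum_le_card => v; apply: deg_le_pred.
Qed.

Lemma degsum_split S A : A \subset S ->
  (forall x y, x \in A -> y \in S -> e x y -> y \in A) ->
  degsum S = degsum A + degsum (S :\: A).
Proof.
move=> AS closedA; rewrite /degsum (big_setID A) /= (setIidPr AS); congr (_ + _).
  apply: eq_bigr => v vA; apply: eq_card => w; rewrite !in_nbhd.
  case evw: (e v w); rewrite ?andbF ?andbT //.
  by apply/idP/idP => [wS|/(subsetP AS)//]; apply: closedA evw.
apply: eq_bigr => v /setDP[vS vA]; apply: eq_card => w; rewrite !in_nbhd inE.
case evw: (e v w); rewrite ?andbF ?andbT //; case wA: (w \in A) => //=.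
by rewrite esym in evw; rewrite (closedA _ _ wA vS evw) in vA.
Qed.

Lemma edge_card E : E \in edge_set e -> #|E| = 2.
Proof.
rewrite inE => /existsP [x /existsP [y /andP[exy /eqP->]]].
by rewrite cards2 (adj_neq exy).
Qed.

Lemma card_edges_at v : #|[set E in edge_set e | v \in E]| = deg setT v.
Proof.
have -> : [set E in edge_set e | v \in E] = [set [set v; w] | w in nbhd setT v].
  apply/setP => E; rewrite inE; apply/andP/imsetP.
    case; rewrite inE => /existsP [x /existsP [y /andP[exy /eqP->]]].
    rewrite !inE => /orP[]/eqP->.
      by exists y => //; rewrite in_nbhd inE.
    by exists x; [rewrite in_nbhd inE esym | rewrite setUC].
  case=> w wN ->; split; last exact: set21.
  rewrite inE; apply/existsP; exists v; apply/existsP; exists w.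
  by move: wN; rewrite in_nbhd inE /= => ->; rewrite eqxx.
apply: card_in_imset => w1 w2 w1N w2N E.
have : w1 \in [set v; w2] by rewrite -E set22.
rewrite !inE => /orP[/eqP e1|/eqP //].
by move: w1N; rewrite in_nbhd e1 eirr andbF.
Qed.

Lemma handshake : 2 * num_edges e = degsum setT.
Proof.
rewrite /num_edges mulnC -sum_nat_const.
have -> : \sum_(i in edge_set e) 2 = \sum_(E in edge_set e) \sum_v (v \in E : nat).
  by apply: eq_bigr => E /edge_card <-; rewrite -sum1_card big_mkcond.
rewrite exchange_big /degsum; apply: eq_big => [v|v _]; first by rewrite inE.
rewrite -card_edges_at -sum1_card [RHS]big_mkcond /= [LHS]big_mkcond /=.
by apply: eq_bigr => E _; rewrite [in RHS]inE; case: (E \in edge_set e) => //; case: (v \in E).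
Qed.

Lemma deg_pred_nbhd S u v : v \in nbhd S u -> #|nbhd S u :\ v| = (deg S u).-1.
Proof. by move=> vN; rewrite /deg (cardsD1 v (nbhd S u)) vN. Qed.

Lemma deg_le_succ S u v : deg S v <= (#|nbhd S v :\ u|).+1.
Proof. by rewrite /deg (cardsD1 u (nbhd S v)); case: (u \in _). Qed.

Lemma degsum_max_deg3 S : 6 <= #|S| -> (forall v, v \in S -> deg S v <= 3) ->
  degsum S + 6 <= 4 * #|S|.
Proof. by move=> big small; have := sum_le_card small; rewrite -/(degsum S); lia. Qed.

Definition sealed S u : bool :=
  [forall x in nbhd S u, forall y in S, e x y ==> (y \in u |: nbhd S u)].

(* Discharging: each edge carries charge 2, split equally between its ends,
   except that a light end of an edge to a heavy (degree >= 5) vertex takes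
   both units.  share S v w is what v receives from the edge vw. *)
Definition heavy S v : bool := 4 < deg S v.
Definition share S v w : nat := (1 + heavy S w) - heavy S v.
Definition charge S v : nat := \sum_(w in S) e v w * share S v w.

Lemma degsum_charge S : degsum S = \sum_(v in S) charge S v.
Proof.
rewrite /degsum /charge; under eq_bigr => v _ do rewrite deg_sum.
symmetry; apply: reweight_sym => v w; first by rewrite esym.
by rewrite /share; case: (heavy S v); case: (heavy S w).
Qed.

Section T62Free.
Hypothesis noT : ~ contains_T62 e.

Lemma no_double_star u v a1 a2 b1 b2 : e u v -> e u a1 -> e u a2 -> e v b1 -> e v b2 ->
  uniq [:: u; v; a1; a2; b1; b2] -> False.
Proof.
move=> euv ea1 ea2 eb1 eb2 U; apply: noT.
set s := [:: u; a1; a2; v; b1; b2].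
have Us : uniq s.
  rewrite -(perm_uniq (_ : perm_eq [:: u; v; a1; a2; b1; b2] s)) //.
  by rewrite perm_cons; apply/permPl; exact: (perm_catCA [:: v] [:: a1; a2] [:: b1; b2]).
exists (fun i : 'I_6 => nth u s i); split.
  by move=> i j /eqP; rewrite nth_uniq // => /eqP /ord_inj.
by move=> uv; rewrite !inE => /orP[|/orP[|/orP[|/orP[]]]] /eqP-> /=; rewrite !inordK.
Qed.

Lemma private_nbrs_small S u v : e u v ->
  1 < #|nbhd S u :\ v| -> 1 < #|nbhd S v :\ u| ->
  #|(nbhd S u :\ v) :|: (nbhd S v :\ u)| <= 3.
Proof.
move=> euv hu hv; rewrite leqNgt; apply/negP => big.
have [a1 [a2 [b1 [b2 [+ + + + U]]]]] := two_plus_two hu hv big.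
rewrite !in_setD1 !in_nbhd => /and3P[a1v _ ea1] /and3P[a2v _ ea2].
move=> /and3P[b1u _ eb1] /and3P[b2u _ eb2].
apply: (no_double_star euv ea1 ea2 eb1 eb2).
rewrite (cons_uniq u) (cons_uniq v) U andbT !inE !negb_or (adj_neq euv).
rewrite (adj_neq ea1) (adj_neq ea2) ![u == _]eq_sym b1u b2u.
by rewrite (eq_sym v a1) (eq_sym v a2) a1v a2v (adj_neq eb1) (adj_neq eb2).
Qed.

Lemma heavy_nbr_light S u v : 4 < deg S u -> v \in nbhd S u -> deg S v <= 2.
Proof.
move=> hu vN; rewrite leqNgt; apply/negP => hv.
have euv : e u v by move: vN; rewrite in_nbhd => /andP[].
have := deg_pred_nbhd vN; have := deg_le_succ S u v.
have := subset_leq_card (subsetUl (nbhd S u :\ v) (nbhd S v :\ u)).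
have := private_nbrs_small (S := S) euv; lia.
Qed.

Lemma nbhd_within S u v : 3 < deg S u -> v \in nbhd S u -> 2 < deg S v ->
  nbhd S v \subset u |: nbhd S u.
Proof.
move=> hu vN hv; apply/subsetP => y yN; rewrite in_setU1.
apply: contraT; rewrite negb_or => /andP[yu ynu].
have euv : e u v by move: vN; rewrite in_nbhd => /andP[].
have yA : y \notin nbhd S u :\ v by rewrite in_setD1 (negbTE ynu) andbF.
have : #|y |: (nbhd S u :\ v)| <= #|(nbhd S u :\ v) :|: (nbhd S v :\ u)|.
  by apply: subset_leq_card; rewrite subUset sub1set in_setU !in_setD1 yu yN orbT subsetUl.
rewrite cardsU1 yA; have := deg_pred_nbhd vN; have := deg_le_succ S u v.
have := private_nbrs_small (S := S) euv; lia.
Qed.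

Lemma nbr_not_heavy S v w : v \in S -> 2 < deg S v -> w \in nbhd S v -> ~~ heavy S w.
Proof.
move=> vS dv wN; apply/negP => hw.
have vNw : v \in nbhd S w by move: wN; rewrite !in_nbhd vS esym => /andP[].
by have := heavy_nbr_light hw vNw; rewrite leqNgt dv.
Qed.

Lemma charge_eq_deg S v : ~~ heavy S v -> {in nbhd S v, forall w, ~~ heavy S w} ->
  charge S v = deg S v.
Proof.
move=> hv hN; rewrite deg_sum; apply: eq_bigr => w wS.
case evw: (e v w) => //=; have wN : w \in nbhd S v by rewrite in_nbhd wS.
by rewrite /share (negbTE hv) (negbTE (hN _ wN)).
Qed.

Lemma charge_heavy S v : v \in S -> heavy S v -> charge S v = 0.
Proof.
move=> vS hv; apply: big1 => w wS; case evw: (e v w) => //=.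
have wN : w \in nbhd S v by rewrite in_nbhd wS.
by rewrite /share hv (negbTE (nbr_not_heavy vS (ltnW (ltnW hv)) wN)).
Qed.

Lemma charge_le4 S v : v \in S -> charge S v <= 4.
Proof.
move=> vS; case hv: (heavy S v); first by rewrite charge_heavy.
case: (ltnP 2 (deg S v)) => dv.
  rewrite charge_eq_deg ?hv // => [|w]; last exact: nbr_not_heavy.
  by rewrite leqNgt; apply: negbT.
apply: (@leq_trans (2 * deg S v)); last by lia.
rewrite deg_sum big_distrr /=; apply: leq_sum => w _.
by rewrite /share hv subn0; case: (e v w); case: (heavy S w).
Qed.

(* With a single heavy vertex x, every other vertex receives at most one unit
   beyond its degree (from its edge to x, if any). *)
Lemma charge_one_heavy S x z : (forall w, w \in S -> heavy S w -> w = x) ->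
  z \in S -> z != x -> charge S z <= (deg S z).+1.
Proof.
move=> onlyx zS zx.
have hz : ~~ heavy S z by apply/negP => /(onlyx _ zS) /eqP; rewrite (negbTE zx).
rewrite deg_sum -addn1.
apply: (@leq_trans (\sum_(w in S) (e z w + (w == x)))).
  apply: leq_sum => w wS; rewrite /share (negbTE hz) subn0.
  case hw: (heavy S w); last by rewrite addn0 muln1 leq_addr.
  by rewrite (onlyx _ wS hw) eqxx; case: (e z x).
rewrite big_split /= leq_add2l.
apply: (@leq_trans (\sum_w (w == x : nat))).
  by rewrite [X in X <= _]big_mkcond /=; apply: leq_sum => w _; case: (w \in S).
by rewrite (bigD1 x) //= eqxx big1 // => w /negbTE ->.
Qed.

(* Two heavy vertices carry no charge, leaving a slack of 8. *)
Lemma degsum_two_heavy S x y : x \in S -> y \in S -> x != y ->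
  heavy S x -> heavy S y -> degsum S + 8 <= 4 * #|S|.
Proof.
move=> xS yS xy hx hy; rewrite degsum_charge.
apply: (extend_bound (Q := [set x; y])); first by rewrite subUset !sub1set xS yS.
  exact: charge_le4.
by rewrite big_setU1 ?inE //= big_set1 !charge_heavy // cards2 xy.
Qed.

(* A unique heavy vertex x: on N[x] the charge is at most 3 deg x, while the
   budget is 4(deg x + 1); the slack 4 + deg x exceeds 6. *)
Lemma degsum_one_heavy S x : x \in S -> heavy S x ->
  (forall w, w \in S -> heavy S w -> w = x) -> degsum S + 6 <= 4 * #|S|.
Proof.
move=> xS hx onlyx; rewrite degsum_charge.
apply: (extend_bound (Q := x |: nbhd S x) (closed_nbhd_sub xS)); first exact: charge_le4.
rewrite big_setU1 ?nbhd_irr //= charge_heavy // card_closed_nbhd.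
have : \sum_(v in nbhd S x) charge S v <= 3 * deg S x.
  apply: sum_le_card => z zN; have /andP[zS exz] : (z \in S) && e x z by rewrite -in_nbhd.
  apply: leq_trans (charge_one_heavy onlyx zS _) _; first by rewrite eq_sym (adj_neq exz).
  exact: heavy_nbr_light hx zN.
by move: hx; rewrite /heavy; lia.
Qed.

Section OpenQuad.
Variables (S : {set T}) (u w z : T).
Hypotheses (maxdeg : forall v, v \in S -> deg S v <= 4) (uS : u \in S) (du : deg S u = 4).
Hypotheses (wN : w \in nbhd S u) (zS : z \in S) (zout : z \notin u |: nbhd S u) (ewz : e w z).

Lemma exit_nbr_adj : (w \in S) && e u w.
Proof. by rewrite -in_nbhd. Qed.

(* w has degree at most 2, else its neighbour z would lie in N[u]; so N(w) = {u, z}. *)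
Lemma exit_nbhd : nbhd S w = [set u; z].
Proof.
have /andP[wS euw] := exit_nbr_adj.
have dw : deg S w <= 2.
  rewrite leqNgt; apply/negP => hw.
  have zNw : z \in nbhd S w by rewrite in_nbhd zS ewz.
  have hu : 3 < deg S u by rewrite du.
  by move: zout; rewrite (subsetP (nbhd_within hu wN hw) z zNw).
apply/eqP; rewrite eq_sym eqEcard subUset !sub1set !in_nbhd zS ewz esym euw.
move: zout; rewrite in_setU1 negb_or cards2 => /andP[zu _].
rewrite (eq_sym u) zu uS; exact: dw.
Qed.

Lemma exit_hidden x : x \in nbhd S u -> w \notin nbhd S x.
Proof.
move=> xN; apply/negP => wNx.
have : x \in nbhd S w by move: wNx; rewrite !in_nbhd esym (subsetP (nbhd_sub S u) x xN) => /andP[].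
rewrite exit_nbhd !inE => /orP[]/eqP xE; first by move: xN; rewrite xE (negbTE (nbhd_irr S u)).
by move: zout; rewrite -xE in_setU1 xN orbT.
Qed.

Lemma card_other_nbrs : #|nbhd S u :\ w| = 3.
Proof. by rewrite deg_pred_nbhd // du. Qed.

Lemma card_other_nbrs_but x : x \in nbhd S u :\ w -> #|(nbhd S u :\ w) :\ x| = 2.
Proof. by move=> xR; have := card_other_nbrs; rewrite (cardsD1 x (nbhd S u :\ w)) xR => -[]. Qed.

(* The three other neighbours of u have degree at most 3: a larger degree
   would force their neighbourhood into u and the two remaining neighbours. *)
Lemma other_nbr_deg x : x \in nbhd S u :\ w -> deg S x <= 3.
Proof.
move=> xR; have /setD1P[xw xN] := xR; rewrite leqNgt; apply/negP => hx.
have hu : 3 < deg S u by rewrite du.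
have sub : nbhd S x \subset u |: ((nbhd S u :\ w) :\ x).
  apply/subsetP => y yNx; have := subsetP (nbhd_within hu xN (ltnW hx)) y yNx.
  rewrite !in_setU1 !in_setD1 => /orP[->//|yN]; rewrite yN andbT; apply/orP; right.
  apply/andP; split; apply: contraTneq yNx => ->; [exact: nbhd_irr | exact: exit_hidden].
have := subset_leq_card sub; rewrite cardsU1 card_other_nbrs_but // -/(deg S x).
have := leq_b1 (u \notin (nbhd S u :\ w) :\ x); lia.
Qed.

Lemma exit_far_nbr : (forall x, x \in nbhd S u :\ w -> 2 < deg S x) ->
  3 < deg S z -> exists2 p, p \in S & (p \notin z |: (u |: nbhd S u)) && (deg S p <= 3).
Proof.
move=> bigR dz; have /andP[wS euw] := exit_nbr_adj.
have wNz : w \in nbhd S z by rewrite in_nbhd wS esym.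
have : 0 < #|nbhd S z :\ w| by rewrite deg_pred_nbhd //; lia.
case/card_gt0P => p /setD1P[pw pNz]; have /andP[pS ezp] : (p \in S) && e z p by rewrite -in_nbhd.
have zNp : z \in nbhd S p by rewrite in_nbhd zS esym.
have pz : p != z by rewrite eq_sym (adj_neq ezp).
have pu : p != u.
  by apply: contraNneq zout => pu; rewrite in_setU1 in_nbhd zS -pu esym ezp orbT.
exists p => //; apply/andP; split.
  rewrite !in_setU1 !negb_or pz pu /=; apply/negP => pN.
  have pR : p \in nbhd S u :\ w by rewrite in_setD1 pw.
  have hu : 3 < deg S u by rewrite du.
  by move: zout; rewrite (subsetP (nbhd_within hu pN (bigR p pR)) z zNp).
rewrite leqNgt; apply/negP => hp.
have pNw : p \in nbhd S w.
  have := subsetP (nbhd_within hp zNp (ltnW dz)) w wNz.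
  by rewrite in_setU1 eq_sym (negbTE pw) /= !in_nbhd pS wS esym.
by move: pNw; rewrite exit_nbhd !inE (negbTE pu) (negbTE pz).
Qed.

(* Count on N[u], on z + N[u], or on p + z + N[u] respectively. *)
Lemma degsum_open_quad : degsum S + 6 <= 4 * #|S|.
Proof.
have /andP[wS euw] := exit_nbr_adj.
have dw : deg S w = 2.
  by move: zout; rewrite /deg exit_nbhd cards2 in_setU1 negb_or eq_sym => /andP[->].
have sumQ : \sum_(v in u |: nbhd S u) deg S v = 6 + \sum_(v in nbhd S u :\ w) deg S v.
  by rewrite big_setU1 ?nbhd_irr //= (big_setD1 _ wN) du dw.
have QS := closed_nbhd_sub uS.
case: (boolP [exists x in nbhd S u :\ w, deg S x <= 2]) => [/exists_inP[x xR dx]|].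
  apply: (extend_bound QS maxdeg); rewrite sumQ card_closed_nbhd du (big_setD1 _ xR) /=.
  have : \sum_(v in (nbhd S u :\ w) :\ x) deg S v <= 3 * 2.
    apply: leq_trans (sum_le_card (c := 3) _) _ => [v /setD1P[_]|].
      exact: other_nbr_deg.
    by rewrite card_other_nbrs_but.
  lia.
move/exists_inPn => smallR.
have bigR x : x \in nbhd S u :\ w -> 2 < deg S x by move/smallR; rewrite ltnNge.
have sumR : \sum_(v in nbhd S u :\ w) deg S v <= 3 * 3.
  by rewrite -{2}card_other_nbrs; apply: sum_le_card; apply: other_nbr_deg.
have QzS : z |: (u |: nbhd S u) \subset S by rewrite subUset sub1set zS QS.
case: (leqP (deg S z) 3) => dz.
  apply: (extend_bound QzS maxdeg).
  by rewrite big_setU1 //= sumQ cardsU1 zout card_closed_nbhd du /=; lia.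
have [p pS /andP[pout dp]] := exit_far_nbr bigR dz.
have QpS : p |: (z |: (u |: nbhd S u)) \subset S by rewrite subUset sub1set pS QzS.
apply: (extend_bound QpS maxdeg).
rewrite big_setU1 //= big_setU1 //= sumQ cardsU1 pout cardsU1 zout card_closed_nbhd du /=.
by have := maxdeg zS; lia.
Qed.

End OpenQuad.

Lemma degsum_unsealed S : 6 <= #|S| ->
  (forall u, u \in S -> deg S u = 4 -> ~~ sealed S u) -> degsum S + 6 <= 4 * #|S|.
Proof.
move=> big unsealed.
case: (boolP [exists x in S, heavy S x]) => [/exists_inP[x xS hx]|/exists_inPn light].
  case: (boolP [exists y in S, (y != x) && heavy S y]) => [|/exists_inPn onlyx].
    by case/exists_inP => y yS /andP[yx hy]; have := degsum_two_heavy yS xS yx hy hx; lia.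
  apply: (degsum_one_heavy xS hx) => w wS hw; apply/eqP; apply: contraT => wx.
  by have := onlyx w wS; rewrite wx hw.
have maxdeg v : v \in S -> deg S v <= 4 by move/light; rewrite /heavy -leqNgt.
case: (boolP [exists u in S, deg S u == 4]) => [/exists_inP[u uS /eqP du]|/exists_inPn no4].
  have /forall_inPn[w wN /forall_inPn[z zS]] := unsealed u uS du.
  rewrite negb_imply => /andP[ewz zout].
  exact: (degsum_open_quad maxdeg uS du wN zS zout ewz).
apply: degsum_max_deg3 => // v vS; have := no4 v vS.
by rewrite -ltnS ltn_neqAle => /negbTE ->; rewrite maxdeg.
Qed.

Theorem degsum_bound S : degsum S + defect #|S| <= 4 * #|S|.
Proof.
have [n] := ubnP #|S|; elim: n S => // n IH S ltSn.
case: (leqP #|S| 5) => [small|big]; first exact: degsum_small.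
case: (boolP [exists u in S, (deg S u == 4) && sealed S u]); last first.
  move/exists_inPn => unsealed; have := defect_le6 #|S|.
  suff: degsum S + 6 <= 4 * #|S| by lia.
  by apply: degsum_unsealed => // u uS du; have := unsealed u uS; rewrite du eqxx.
case/exists_inP => u uS /andP[/eqP du /forall_inP sealedu].
set A := u |: nbhd S u; have AS : A \subset S := closed_nbhd_sub uS.
have closedA x y : x \in A -> y \in S -> e x y -> y \in A.
  case/setU1P => [->|xN] yS exy; first by rewrite in_setU1 in_nbhd yS exy orbT.
  by have /forall_inP/(_ y yS)/implyP := sealedu x xN; apply.
have cA : #|A| = 5 by rewrite card_closed_nbhd du.
have cS : #|S| = #|A| + #|S :\: A| by rewrite -(cardsID A S) (setIidPr AS).
have sizeA : #|A| < n by lia.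
have sizeB : #|S :\: A| < n by lia.
rewrite (degsum_split AS closedA) cS.
have := IH A sizeA; have := IH _ sizeB; have := defect_subadd #|A| #|S :\: A|; lia.
Qed.

End T62Free.

End Graph.


Theorem lemma3p4 (T : finType) (e : rel T) :
  simple_graph e -> 6 <= #|T| -> ~ contains_T62 e ->
  2 * num_edges e + (#|T| %% 5) * (5 - #|T| %% 5) <= 4 * #|T|.
Proof.
move=> [esym eirr] _ noT.
rewrite (handshake esym eirr) -cardsT.
exact: (degsum_bound esym eirr noT).
Qed.
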